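(* Let $k$ and $M$ be positive integers, and let $M=p_{1}^{e_{1}}p_{2}^{e_{2}}\cdots p_{l}^{e_{l}}$ be the prime factorization of $M$, where $p_1,\dots,p_l$ are distinct primes. For any integers $n,m\geq \max\{e_j \mid 1\leq j\leq l\}$ satisfying $n\equiv m \pmod{\varphi(M)}$, we have \[ L(k,n)\equiv L(k,m)\pmod{M}. \]
   Context: A matrix with entries in $\{0,1\}$ is called lonesum if it is uniquely determined (among $0$-$1$ matrices of the same size) by its row sum vector and column sum vector. For positive integers $k,n$, $L(k,n)$ denotes the number of lonesum matrices of size $k\times n$. $\varphi$ denotes Euler's totient function. *)

From mathcomp Require Import all_boot all_algebra.
Set Implicit Arguments. Unset Strict Implicit. Unset Printing Implicit Defensive.

Definition rowsum k n (A : 'M[bool]_(k, n)) (i : 'I_k) : nat := \sum_(j < n) A i j.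
Definition colsum k n (A : 'M[bool]_(k, n)) (j : 'I_n) : nat := \sum_(i < k) A i j.

Definition lonesum k n (A : 'M[bool]_(k, n)) : bool :=
  [forall B : 'M[bool]_(k, n),
     ([forall i, rowsum B i == rowsum A i] && [forall j, colsum B j == colsum A j])
     ==> (B == A)].

Definition L (k n : nat) : nat := #|[pred A : 'M[bool]_(k, n) | lonesum A]|.

Definition max_exp (M : nat) : nat := \max_(p <- primes M) logn p M.

(* A 0-1 matrix is lonesum iff the supports of its columns form a chain under
   inclusion: two incomparable columns allow a 2x2 interchange that keeps all
   line sums, while along a chain every entry is forced by a threshold rule on
   the line sums.  So L(k,n) counts the maps from the n columns onto a chain of
   subsets of the k rows, and inclusion-exclusion over the image writes L(k,n)
   as an integer combination, independent of n, of powers c^n.  Finally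
   a^n = a^m (mod p^e) for every prime power p^e dividing M: by Euler's theorem
   when p does not divide a, and because n, m >= e when it does. *)

From mathcomp Require Import all_boot all_order all_algebra.
From mathcomp Require Import perm cyclic zify ring.
Set Implicit Arguments. Unset Strict Implicit. Unset Printing Implicit Defensive.
Import Order.TTheory GRing.Theory Num.Theory.

Lemma logn_le_max_exp M p : p \in primes M -> logn p M <= max_exp M.
Proof. by move=> pM; apply: (@leq_bigmax_seq _ _ xpredT). Qed.

Lemma expn_congr_prime_power p e a n m : prime p -> e <= n <= m ->
  totient (p ^ e) %| m - n -> a ^ n = a ^ m %[mod p ^ e].
Proof.
move=> p_pr /andP[le_en le_nm] /dvdnP[q def_mn].
have [p_a | p'a] := boolP (p %| a).
  have pe_dvd j : e <= j -> a ^ j = 0 %[mod p ^ e].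
    move=> le_ej; apply/eqP; rewrite mod0n.
    exact: dvdn_trans (dvdn_exp2l p le_ej) (dvdn_exp2r _ p_a).
  by rewrite !pe_dvd // (leq_trans le_en).
have co_a_pe : coprime a (p ^ e) by rewrite coprimeXr // coprime_sym prime_coprime.
rewrite -(subnKC le_nm) expnD def_mn expnM -[RHS]modnMmr.
by rewrite Euler_exp_totient ?coprimeXl // modnMmr muln1.
Qed.

Lemma expn_congr_mod_le M a n m : 0 < M -> 0 < n -> n <= m -> max_exp M <= n ->
  totient M %| m - n -> a ^ n = a ^ m %[mod M].
Proof.
move=> M_gt0 n_gt0 le_nm le_Mn tM_dvd.
have [-> | a_gt0] := posnP a; first by rewrite !exp0n ?(leq_trans n_gt0).
have le_an_am : a ^ n <= a ^ m by rewrite leq_pexp2l.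
apply/eqP; rewrite eq_sym eqn_mod_dvd //; apply/(dvdn_partP _ M_gt0) => p pM.
have p_pr : prime p by move: pM; rewrite mem_primes => /andP[].
rewrite p_part -eqn_mod_dvd //.
apply/eqP; symmetry; apply: expn_congr_prime_power => //.
  by rewrite le_nm (leq_trans (logn_le_max_exp pM)).
apply: dvdn_trans tM_dvd.
by rewrite -p_part -{2}(partnC p M_gt0) totient_coprime ?coprime_partC ?dvdn_mulr.
Qed.

Lemma expn_congr_mod M a n m : 0 < M -> 0 < n -> 0 < m ->
  max_exp M <= n -> max_exp M <= m -> n = m %[mod totient M] ->
  a ^ n = a ^ m %[mod M].
Proof.
move=> M_gt0 n_gt0 m_gt0 le_Mn le_Mm /eqP eq_nm.
have [le_nm | /ltnW le_mn] := leqP n m.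
  by apply: expn_congr_mod_le; rewrite // -eqn_mod_dvd // eq_sym.
by symmetry; apply: expn_congr_mod_le; rewrite // -eqn_mod_dvd.
Qed.

Section InclusionExclusion.
Local Open Scope ring_scope.
Variable U : finType.
Implicit Types A S X : {set U}.

Lemma sum_sign_interval A S :
  \sum_(X : {set U} | (A \subset X) && (X \subset S)) (-1) ^+ #|S :\: X|
    = (A == S)%:R :> int.
Proof.
have [<- | neqAS] := eqVneq A S.
  by rewrite (big_pred1 A) ?setDv ?cards0 // => X; rewrite -eqEsubset eq_sym.
have [sAS | nsAS] := boolP (A \subset S); last first.
  by rewrite big_pred0 // => X; apply: contraNF nsAS => /andP[/subset_trans]; apply.
have [x Sx A'x] : exists2 x, x \in S & x \notin A.
  by apply/subsetPn; apply: contra neqAS => sSA; rewrite eqEsubset sAS.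
(* Toggling [x] is a sign-reversing involution of the summation range. *)
pose g X := if x \in X then X :\ x else x |: X.
have in_g X y : (y \in g X) = (if y == x then x \notin X else y \in X).
  by rewrite /g; case: ifP => Xx; rewrite !inE; case: eqVneq => // ->; rewrite Xx.
have gK : involutive g.
  by move=> X; apply/setP => y; rewrite !in_g; case: eqVneq => // ->; rewrite eqxx negbK.
have subA_g X : (A \subset g X) = (A \subset X).
  apply/subsetP/subsetP => sAX y Ay; move: (sAX y Ay); rewrite in_g;
    by case: eqVneq Ay => // ->; rewrite (negbTE A'x).
have subg_S X : (g X \subset S) = (X \subset S).
  apply/subsetP/subsetP => sXS y; have:= sXS y; rewrite in_g;
    by case: eqVneq => // ->.
have sign_g X : (-1) ^+ #|S :\: g X| = - (-1) ^+ #|S :\: X| :> int.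
  have SDx Y : #|S :\: Y| = ((x \notin Y) + #|(S :\: Y) :\ x|)%N.
    by rewrite (cardsD1 x) !inE Sx andbT.
  rewrite !SDx in_g eqxx negbK.
  have -> : (S :\: g X) :\ x = (S :\: X) :\ x.
    by apply/setP => y; rewrite !inE in_g; case: eqVneq.
  by case: (x \in X); rewrite !exprD ?expr1 ?expr0 ?mulN1r ?mul1r ?opprK.
set s := \sum_(X | _) _; suff : s = - s by rewrite /=; lia.
rewrite {1}/s (reindex_inj (inv_inj gK)) -sumrN /=.
by apply: eq_big => X; rewrite ?subA_g ?subg_S // => _; rewrite sign_g.
Qed.

Lemma card_ffun_imset (D : finType) (P : pred {set U}) :
  #|[pred F : {ffun D -> U} | P [set F d | d : D]]|%:R =
  \sum_(S | P S) \sum_(X : {set U} | X \subset S)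
     (-1) ^+ #|S :\: X| * (#|X| ^ #|D|)%:R :> int.
Proof.
have im_sub (F : {ffun D -> U}) X : ([set F d | d : D] \subset X) = (F \in ffun_on X).
  by apply/subsetP/ffun_onP => [sFX d | FX _ /imsetP[d _ ->]] //; apply/sFX/imset_f.
(* Expand the indicator of [P (image F)] by sum_sign_interval, then count, for
   each X, the [#|X| ^ #|D|] maps F with image inside X. *)
transitivity (\sum_(F : {ffun D -> U}) \sum_(S | P S)
  \sum_(X : {set U} | ([set F d | d : D] \subset X) && (X \subset S))
     (-1) ^+ #|S :\: X| : int).
  rewrite -sum1_card natr_sum big_mkcond /=; apply: eq_bigr => F _.
  under eq_bigr do rewrite sum_sign_interval.
  rewrite big_mkcond (bigD1 [set F d | d : D]) //= eqxx big1 ?addr0 ?inE //.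
  by move=> S /negbTE; rewrite eq_sym => ->; case: ifP.
rewrite exchange_big /=; apply: eq_bigr => S _.
rewrite (exchange_big_dep (fun X => X \subset S)) /= => [|F X _ /andP[] //].
apply: eq_bigr => X sXS; rewrite -card_ffun_on mulr_natr -sumr_const.
by apply: eq_bigl => F; rewrite im_sub sXS andbT.
Qed.
End InclusionExclusion.

Definition subset_chain (T : finType) (S : {set {set T}}) : bool :=
  [forall x in S, forall y in S, (x \subset y) || (y \subset x)].

Lemma subset_chain_imsetP (I T : finType) (F : I -> {set T}) :
  reflect (forall i j, (F i \subset F j) || (F j \subset F i))
          (subset_chain [set F i | i : I]).
Proof.
have F_in i : F i \in [set F i | i : I] by apply/imsetP; exists i.
apply: (iffP forall_inP) => [chF i j | chF _ /imsetP[i _ ->]].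
  by have /forall_inP := chF _ (F_in i); apply.
by apply/forall_inP => _ /imsetP[j _ ->]; apply: chF.
Qed.

Lemma threshold_leif (x y : bool) (r t : nat) : x = (t <= r) ->
  (0 <= (x%:R - y%:R) * (r%:R * 2 + 1 - t%:R * 2) ?= iff (x == y) :> int)%R.
Proof. by case: x; case: y => /= e; split; lia. Qed.

Lemma tperm_flip (T : finType) (f : T -> bool) x y z : f x != f y ->
  f (tperm x y z) = if (z == x) || (z == y) then ~~ f z else f z.
Proof.
move=> /negPf fxy; case: tpermP => [->|->|/eqP/negPf-> /eqP/negPf->] //.
  by rewrite eqxx; case: (f x) fxy; case: (f y).
by rewrite eqxx orbT; case: (f x) fxy; case: (f y).
Qed.

Section Lonesum.
Variables k n : nat.
Implicit Types A B : 'M[bool]_(k, n).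

Definition cols A : {ffun 'I_n -> {set 'I_k}} := [ffun j => [set i | A i j]].

Lemma in_cols A i j : (i \in cols A j) = A i j.
Proof. by rewrite ffunE inE. Qed.

Definition nsupcols A j := #|[set j' | cols A j \subset cols A j']|.

Lemma rowsum_card A i : rowsum A i = #|[set j | A i j]|.
Proof.
rewrite /rowsum -sum1_card [RHS]big_mkcond /=.
by apply: eq_bigr => j _; rewrite inE; case: (A i j).
Qed.

Lemma cols_chain_entry A i j : subset_chain [set cols A j' | j' : 'I_n] ->
  A i j = (nsupcols A j <= rowsum A i).
Proof.
move=> /subset_chain_imsetP chA; rewrite rowsum_card /nsupcols.
case Aij: (A i j).
  apply/esym/subset_leq_card/subsetP => j'; rewrite !inE => /subsetP sub_j'.
  by rewrite -in_cols sub_j' ?in_cols.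
apply/esym/negbTE; rewrite -ltnNge; apply: proper_card; rewrite properE.
apply/andP; split.
  apply/subsetP => j'; rewrite !inE => Aij'.
  case/orP: (chA j j') => // /subsetP sub_j.
  by have := sub_j i; rewrite !in_cols Aij' Aij => /(_ isT).
by apply/subsetPn; exists j; rewrite !inE ?Aij.
Qed.

Lemma cols_chain_lonesum A : subset_chain [set cols A j | j : 'I_n] -> lonesum A.
Proof.
move=> chA; apply/forallP => B; apply/implyP => /andP[/forallP eq_row /forallP eq_col].
(* By cols_chain_entry the weight [w i j] is positive exactly where [A i j]
   holds, so every [d i j * w i j] is nonnegative; yet their sum vanishes
   since A and B have the same line sums. *)
pose d i j : int := ((A i j)%:R - (B i j)%:R)%R.
pose w i j : int := ((rowsum A i)%:R * 2 + 1 - (nsupcols A j)%:R * 2)%R.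
have row_d i : (\sum_j d i j = 0)%R.
  by rewrite sumrB -!natr_sum; move: (eq_row i); rewrite /rowsum => /eqP->; rewrite subrr.
have col_d j : (\sum_i d i j = 0)%R.
  by rewrite sumrB -!natr_sum; move: (eq_col j); rewrite /colsum => /eqP->; rewrite subrr.
have sum_dw : (\sum_i \sum_j d i j * w i j = 0)%R.
  transitivity (\sum_i (\sum_j d i j) * ((rowsum A i)%:R * 2 + 1)
                - \sum_j (\sum_i d i j) * ((nsupcols A j)%:R * 2) : int)%R.
    under [X in (_ - X)%R]eq_bigr do rewrite mulr_suml.
    rewrite [X in (_ - X)%R]exchange_big -sumrB; apply: eq_bigr => i _.
    by rewrite mulr_suml -sumrB; apply: eq_bigr => j _; rewrite /w; ring.
  by rewrite !big1 ?subrr // => ? _; rewrite ?row_d ?col_d mul0r.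
have dw_leif i j := threshold_leif (B i j) (cols_chain_entry i j chA).
have := leif_sum (P := xpredT)
  (fun i _ => leif_sum (P := xpredT) (fun j _ => dw_leif i j)).
rewrite !big1_eq sum_dw => /leif_refl /forall_inP AeqB.
by apply/eqP/matrixP => i j; have /forall_inP/(_ j isT)/eqP := AeqB i isT.
Qed.

Definition interchange A i1 i2 j1 j2 : 'M[bool]_(k, n) :=
  \matrix_(i, j) if ((i == i1) || (i == i2)) && ((j == j1) || (j == j2))
                 then ~~ A i j else A i j.

Section Interchange.
Variables (A : 'M[bool]_(k, n)) (i1 i2 : 'I_k) (j1 j2 : 'I_n).
Hypotheses (A_i1 : A i1 j1 != A i1 j2) (A_i2 : A i2 j1 != A i2 j2).
Hypotheses (A_j1 : A i1 j1 != A i2 j1) (A_j2 : A i1 j2 != A i2 j2).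

Lemma rowsum_interchange i : rowsum (interchange A i1 i2 j1 j2) i = rowsum A i.
Proof.
rewrite /rowsum; under eq_bigr do rewrite mxE.
have [/orP i_i12 | //] := boolP ((i == i1) || (i == i2)).
rewrite [RHS](reindex_inj (@perm_inj _ (tperm j1 j2))); apply: eq_bigr => j _.
by rewrite tperm_flip //; case: i_i12 => /eqP->.
Qed.

Lemma colsum_interchange j : colsum (interchange A i1 i2 j1 j2) j = colsum A j.
Proof.
rewrite /colsum; under eq_bigr do rewrite mxE.
have [/orP j_j12 | _] := boolP ((j == j1) || (j == j2)); last first.
  by under eq_bigr do rewrite andbF.
rewrite [RHS](reindex_inj (@perm_inj _ (tperm i1 i2))); apply: eq_bigr => i _.
by rewrite (tperm_flip (f := A^~ j)) ?andbT //; case: j_j12 => /eqP->.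
Qed.
End Interchange.

Lemma lonesum_cols_chain A : lonesum A -> subset_chain [set cols A j | j : 'I_n].
Proof.
move=> lsA; apply/subset_chain_imsetP => j1 j2; apply/negPn/negP => /norP[/subsetPn[i1]].
rewrite !in_cols => A11 /negPf A12 /subsetPn[i2]; rewrite !in_cols => A22 /negPf A21.
have B_eq_A : interchange A i1 i2 j1 j2 = A.
  apply/eqP/(implyP (forallP lsA _)).
  by apply/andP; split; apply/forallP => ?; apply/eqP;
    [apply: rowsum_interchange | apply: colsum_interchange]; rewrite ?A11 ?A12 ?A21 ?A22.
by move/matrixP: B_eq_A => /(_ i1 j1); rewrite mxE !eqxx A11.
Qed.

Lemma lonesumE A : lonesum A = subset_chain [set cols A j | j : 'I_n].
Proof.
by apply/idP/idP; [apply: lonesum_cols_chain | apply: cols_chain_lonesum].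
Qed.

Lemma cols_bij : bijective cols.
Proof.
exists (fun F : {ffun 'I_n -> {set 'I_k}} => (\matrix_(i, j) (i \in F j))%R).
  by move=> A; apply/matrixP => i j; rewrite mxE in_cols.
by move=> F; apply/ffunP => j; apply/setP => i; rewrite in_cols mxE.
Qed.

Lemma L_card_chains :
  L k n = #|[pred F : {ffun 'I_n -> {set 'I_k}} | subset_chain [set F j | j : 'I_n]]|.
Proof.
rewrite /L -!sum1_card [RHS](reindex cols) /=; last exact: onW_bij cols_bij.
by apply: eq_bigl => A; rewrite !inE lonesumE.
Qed.
End Lonesum.

Lemma L_expansion k n :
  ((L k n)%:R = \sum_(S : {set {set 'I_k}} | subset_chain S)
                  \sum_(X : {set {set 'I_k}} | X \subset S)
                     (-1) ^+ #|S :\: X| * (#|X| ^ n)%:R :> int)%R.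
Proof. by rewrite L_card_chains card_ffun_imset card_ord. Qed.

Theorem theorem2p4 (k M n m : nat) :
  0 < k -> 0 < M -> 0 < n -> 0 < m ->
  max_exp M <= n -> max_exp M <= m ->
  n = m %[mod totient M] ->
  L k n = L k m %[mod M].
Proof.
move=> _ M_gt0 n_gt0 m_gt0 le_Mn le_Mm eq_nm.
have : (M%:Z %| ((L k n)%:R - (L k m)%:R)%R)%Z.
  rewrite !L_expansion -sumrB; apply: rpred_sum => S _.
  rewrite -sumrB; apply: rpred_sum => X _; rewrite -mulrBr; apply: dvdz_mull.
  rewrite !natz -eqz_mod_dvd !modz_nat.
  by rewrite (expn_congr_mod _ M_gt0 n_gt0 m_gt0 le_Mn le_Mm eq_nm).
by rewrite !natz -eqz_mod_dvd !modz_nat => /eqP[].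
Qed.
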